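(* Consider the setting described in the context, and fix a round index $k\ge 0$ and two distinct UAVs $i\neq j$. Assume that $$\Big\|\Theta^{-1}\big[\hat p_j(hT_c+2T\,|\,(k-1)T)-\hat p_i(hT_c+2T\,|\,(k-1)T)\big]\Big\|_2\ \ge\ \hat r_{\min}\qquad\text{for all } h\in\{0,\dots,h_c\}.$$ Assume moreover that the round-$k$ planned positions of both UAVs satisfy the collision-avoidance constraint (C) of round $k$: UAV $i$'s plan satisfies (C) with respect to $j$, and UAV $j$'s plan satisfies (C) with respect to $i$. This is assumed to hold regardless of whether either trajectory was recomputed at round $k$ or obtained by the reuse rule. Then $$\Big\|\Theta^{-1}\big[\hat p_j(hT_c+T\,|\,kT)-\hat p_i(hT_c+T\,|\,kT)\big]\Big\|_2\ \ge\ \hat r_{\min}\qquad\text{for all } h\in\{0,\dots,h_c\}.$$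
   Context: We consider $N$ UAVs indexed by $i\in\{1,\dots,N\}$, all with linear dynamics $\dot x_i=A_ix_i+B_iu_i$. The state is partitioned as $x_i=(p_i,v_i,y_i)$, where $p_i\in\mathbb R^3$ is the position, $v_i$ is the velocity and $y_i$ collects the remaining state components. $\Theta$ is a fixed invertible $3\times 3$ matrix, and $\hat r_{\min}>0$ is a design constant. Planning takes place in rounds at times $kT$ with $T>0$. At round $k$, each UAV $i$ has a planned state trajectory $\hat x_i(\tau\,|\,kT)$, $\tau\ge T$, with planned position part $\hat p_i(\tau\,|\,kT)$; it describes the absolute time $kT+\tau$. The trajectory planned at round $k$ starts at $\tau=T$. Let $T_c>0$ and $h_c\in\mathbb N$ be such that $T/T_c=h_c/H\in\mathbb N$ for a horizon $H\in\mathbb N$. For $h\in\{0,\dots,h_c\}$ write $$n_{ij}^{h}:=\Theta^{-1}\big[\hat p_j(hT_c+2T\,|\,(k-1)T)-\hat p_i(hT_c+2T\,|\,(k-1)T)\big].$$ The collision-avoidance constraint (C) of round $k$ for UAV $i$ with respect to UAV $j$ requires, for all $h\in\{0,\dots,h_c\}$, $$\frac{(n_{ij}^h)^\top}{\|n_{ij}^h\|_2}\,\Theta^{-1}\big[\hat p_j(hT_c+2T\,|\,(k-1)T)-\hat p_i(hT_c+T\,|\,kT)\big]\ \ge\ \tfrac12\big(\hat r_{\min}+\|n_{ij}^h\|_2\big).$$ The reuse rule (applied when UAV $i$'s trajectory is not recomputed at round $k$) sets $\hat x_i(t\,|\,kT)=\hat x_i(t+T\,|\,(k-1)T)$ and $u_i(t\,|\,kT)=u_i(t+T\,|\,(k-1)T)$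 for all $t\ge T$. *)

From HB Require Import structures.
From mathcomp Require Import all_boot all_order all_algebra.
Set Implicit Arguments. Unset Strict Implicit. Unset Printing Implicit Defensive.
Import Order.TTheory GRing.Theory Num.Theory.
Local Open Scope ring_scope.

Definition norm2 {R : rcfType} (v : 'cV[R]_3) : R :=
  Num.sqrt (\sum_(a < 3) (v a 0) ^+ 2).

Definition dot3 {R : rcfType} (u v : 'cV[R]_3) : R := (u^T *m v) 0 0.

(* Position part p_i of a state x_i = (p_i, v_i, y_i) in R^(3 + (3 + d)). *)
Definition pos {R : rcfType} {d : nat} (x : 'cV[R]_(3 + (3 + d))) : 'cV[R]_3 :=
  usubmx x.

(* Planned position hat p_i(tau | k T) of UAV i from the planned state
   trajectory xhat i k tau = hat x_i(tau | k T); rounds are indexed by int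
   so that round k-1 makes sense for k = 0. *)
Definition phat {R : rcfType} {N : nat} {d : 'I_N -> nat}
  (xhat : forall i : 'I_N, int -> R -> 'cV[R]_(3 + (3 + d i)))
  (i : 'I_N) (k : int) (tau : R) : 'cV[R]_3 := pos (xhat i k tau).

Definition nvec {R : rcfType} {N : nat} {d : 'I_N -> nat}
  (Theta : 'M[R]_3) (T Tc : R)
  (xhat : forall i : 'I_N, int -> R -> 'cV[R]_(3 + (3 + d i)))
  (k : int) (i j : 'I_N) (h : nat) : 'cV[R]_3 :=
  invmx Theta *m (phat xhat j (k - 1) (h%:R * Tc + 2 * T)
                  - phat xhat i (k - 1) (h%:R * Tc + 2 * T)).

Definition constraintC {R : rcfType} {N : nat} {d : 'I_N -> nat}
  (Theta : 'M[R]_3) (rmin T Tc : R) (hc : nat)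
  (xhat : forall i : 'I_N, int -> R -> 'cV[R]_(3 + (3 + d i)))
  (k : int) (i j : 'I_N) : Prop :=
  forall h : nat, (h <= hc)%N ->
    let n := nvec Theta T Tc xhat k i j h in
    dot3 n (invmx Theta *m (phat xhat j (k - 1) (h%:R * Tc + 2 * T)
                            - phat xhat i k (h%:R * Tc + T))) / norm2 n
    >= (rmin + norm2 n) / 2.

(* Write n for the scaled previous separation Θ⁻¹(p_j - p_i). The constraint of UAV i
   puts its new position in the half-space at distance (r_min + |n|)/2 from p_j along
   n/|n|, and that of UAV j puts its new position symmetrically on the other side of
   p_i. Adding the two inequalities, the new separation has component at least r_min
   along n/|n|, so by Cauchy-Schwarz its norm is at least r_min. *)
From HB Require Import structures.
From mathcomp Require Import all_boot all_order all_algebra ring lra.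
Import Order.TTheory GRing.Theory Num.Theory.
Local Open Scope ring_scope.

Section Dot3.
Variable R : rcfType.
Implicit Types u v w : 'cV[R]_3.

Lemma dot3E u v : dot3 u v = \sum_(a < 3) u a 0 * v a 0.
Proof. by rewrite /dot3 mxE; apply: eq_bigr => a _; rewrite mxE. Qed.

Lemma dot3Dr u v w : dot3 u (v + w) = dot3 u v + dot3 u w.
Proof. by rewrite /dot3 mulmxDr mxE. Qed.

Lemma dot3Nr u v : dot3 u (- v) = - dot3 u v.
Proof. by rewrite /dot3 mulmxN mxE. Qed.

Lemma dot3Br u v w : dot3 u (v - w) = dot3 u v - dot3 u w.
Proof. by rewrite dot3Dr dot3Nr. Qed.

Lemma dot3Nl u v : dot3 (- u) v = - dot3 u v.
Proof. by rewrite /dot3 linearN /= mulNmx mxE. Qed.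

Lemma norm2_ge0 u : 0 <= norm2 u.
Proof. exact: sqrtr_ge0. Qed.

Lemma norm2N u : norm2 (- u) = norm2 u.
Proof. by rewrite /norm2; congr Num.sqrt; apply: eq_bigr => a _; rewrite mxE sqrrN. Qed.

Lemma dot3_self u : dot3 u u = norm2 u ^+ 2.
Proof.
rewrite /norm2 sqr_sqrtr ?sumr_ge0 // => [|a _]; last exact: sqr_ge0.
by rewrite dot3E; apply: eq_bigr => a _; rewrite expr2.
Qed.

Lemma dot3_le_norm2 u v : dot3 u v <= norm2 u * norm2 v.
Proof.
have [le0|gt0] := lerP (dot3 u v) 0.
  by apply: le_trans le0 _; rewrite mulr_ge0 ?norm2_ge0.
rewrite -ler_sqr ?nnegrE ?mulr_ge0 ?norm2_ge0 ?(ltW gt0) // exprMn -!dot3_self !dot3E.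
rewrite !big_ord_recl !big_ord0 !addr0.
set a0 := u _ 0; set a1 := u _ 0; set a2 := u _ 0.
set b0 := v _ 0; set b1 := v _ 0; set b2 := v _ 0.
(* Lagrange's identity *)
have -> : (a0 * a0 + (a1 * a1 + a2 * a2)) * (b0 * b0 + (b1 * b1 + b2 * b2))
  = (a0 * b0 + (a1 * b1 + a2 * b2)) ^+ 2
    + ((a0 * b1 - a1 * b0) ^+ 2 + (a0 * b2 - a2 * b0) ^+ 2 + (a1 * b2 - a2 * b1) ^+ 2)
  by ring.
by rewrite lerDl !addr_ge0 ?sqr_ge0.
Qed.

Lemma halfspace_constraints_keep_distance (rmin : R) (p q a b : 'cV[R]_3) :
  rmin <= norm2 (q - p) ->
  (rmin + norm2 (q - p)) / 2 <= dot3 (q - p) (q - a) / norm2 (q - p) ->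
  (rmin + norm2 (p - q)) / 2 <= dot3 (p - q) (p - b) / norm2 (p - q) ->
  rmin <= norm2 (b - a).
Proof.
have [rmin_le0 _ _ _|rmin_gt0] := lerP rmin 0.
  exact: le_trans rmin_le0 (norm2_ge0 _).
have -> : p - q = - (q - p) by rewrite opprB.
rewrite norm2N; set n := q - p => rmin_le_n Ci Cj.
have n_gt0 : 0 < norm2 n := lt_le_trans rmin_gt0 rmin_le_n.
rewrite ler_pdivlMr // in Ci; rewrite ler_pdivlMr // in Cj.
have sum_dots : dot3 n (q - a) + dot3 (- n) (p - b) = norm2 n ^+ 2 + dot3 n (b - a).
  rewrite dot3Nl -dot3Br -dot3_self -dot3Dr; congr dot3.
  by rewrite opprB [b - p]addrC addrACA [- a + b]addrC.
have proj_ge : rmin * norm2 n <= dot3 n (b - a).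
  by move: sum_dots; rewrite expr2; lra.
rewrite -(ler_pM2r n_gt0); apply: le_trans proj_ge _.
by rewrite mulrC dot3_le_norm2.
Qed.

End Dot3.

Theorem lemma1 (R : rcfType) (N : nat) (d : 'I_N -> nat)
  (Theta : 'M[R]_3) (rmin T Tc : R) (hc H : nat)
  (xhat : forall i : 'I_N, int -> R -> 'cV[R]_(3 + (3 + d i)))
  (k : int) (i j : 'I_N) :
  Theta \in unitmx ->
  0 < rmin -> 0 < T -> 0 < Tc -> (0 < H)%N ->
  T / Tc = hc%:R / H%:R -> (exists m : nat, T / Tc = m%:R) ->
  0 <= k -> i != j ->
  (forall h : nat, (h <= hc)%N ->
     norm2 (invmx Theta *m (phat xhat j (k - 1) (h%:R * Tc + 2 * T)
                            - phat xhat i (k - 1) (h%:R * Tc + 2 * T))) >= rmin) ->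
  constraintC Theta rmin T Tc hc xhat k i j ->
  constraintC Theta rmin T Tc hc xhat k j i ->
  forall h : nat, (h <= hc)%N ->
    norm2 (invmx Theta *m (phat xhat j k (h%:R * Tc + T)
                           - phat xhat i k (h%:R * Tc + T))) >= rmin.
Proof.
(* Only the previous separation and the two constraints matter: the argument is
   pointwise in h and works for any matrix in place of invmx Theta. *)
move=> _ _ _ _ _ _ _ _ _ sep Ci Cj h le_h_hc.
move: (sep h le_h_hc) (Ci h le_h_hc) (Cj h le_h_hc); rewrite /nvec /= !mulmxBr.
exact: halfspace_constraints_keep_distance.
Qed.
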